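(* Suppose Assumption A holds with constant $d$, and let $r>0$. Then there exists $\epsilon_o\in(0,1)$ (depending only on $\mathfrak a$ and $\lambda$) such that for all $\epsilon\in(0,\epsilon_o)$, $$\sup_{\theta^\circ\in\Theta^r_{\mathfrak a}}\mathbb E_{\theta^\circ}\|\hat\theta^{m^*_\epsilon}-\theta^\circ\|^2\le(2+r/d^2)(1\vee r)\,\Phi^*_\epsilon .$$
   Context: Let $\ell^2$ be the space of square-summable real sequences with norm $\|\cdot\|$. Fix a bounded real sequence $\lambda=(\lambda_j)_{j\ge1}$ with $\lambda_j\ne0$ for all $j$ and a noise level $\epsilon\in(0,1)$. For a parameter $\theta^\circ$ the data $Y=(Y_j)_{j\ge1}$ satisfy $Y_j=\lambda_j\theta^\circ_j+\sqrt\epsilon\,\xi_j$ with $\xi_j$ i.i.d. $N(0,1)$; $\mathbb E_{\theta^\circ}$ denotes expectation under this law. Fix prior means $\eta=(\eta_j)_{j\ge1}$ and prior variances $\tau_j\in(0,\infty)$ (possibly depending on $\epsilon$). For $m\in\mathbb N$ the sieve prior is the law of $\vartheta^m$ with independent coordinates, $\vartheta^m_j\sim N(\eta_j,\tau_j)$ for $j\le m$ and $\vartheta^m_j=\eta_j$ a.s. for $j>m$, in the model $Y_j=\lambda_j\vartheta^m_j+\sqrt\epsilon\xi_j$. Put $\sigma_j:=(\lambda_j^2\epsilon^{-1}+\tau_j^{-1})^{-1}$ and $\theta^Y_j:=\sigma_j(\tau_j^{-1}\eta_j+\lambda_j\epsilon^{-1}Y_j)$. The Bayes estimator is $\hat\theta^m:=\mathbb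 E[\vartheta^m|Y]$, i.e. $\hat\theta^m_j=\theta^Y_j$ for $j\le m$, $\hat\theta^m_j=\eta_j$ for $j>m$. Let $\Lambda_j:=\lambda_j^{-2}$, $\Lambda_{(m)}:=\max_{1\le j\le m}\Lambda_j$, $\bar\Lambda_m:=m^{-1}\sum_{j=1}^m\Lambda_j$. Let $G_\epsilon:=\max\{1\le m\le\lfloor\epsilon^{-1}\rfloor:\epsilon\Lambda_{(m)}\le\Lambda_1\}$. Assumption A: there is a constant $d>0$ such that $\tau_j\ge d\,(\epsilon^{1/2}\Lambda_j^{1/2}\vee\epsilon\Lambda_j)$ for all $1\le j\le G_\epsilon$ and all $\epsilon\in(0,1)$. Let $\mathfrak a=(\mathfrak a_j)_{j\ge1}$ be strictly positive, non-increasing, with $\mathfrak a_1=1$ and $\mathfrak a_j\to0$. For $r>0$ the ellipsoid is $\Theta^r_{\mathfrak a}:=\{\theta:\sum_{j\ge1}(\theta_j-\eta_j)^2/\mathfrak a_j\le r\}$. Minimax quantities: $m^*_\epsilon:=\min\{m\ge1:\mathfrak a_m\vee\epsilon m\bar\Lambda_m\le\mathfrak a_k\vee\epsilon k\bar\Lambda_k\text{ for all }k\ge1\}$ and $\Phi^*_\epsilon:=\mathfrak a_{m^*_\epsilon}\vee\epsilon m^*_\epsilon\bar\Lambda_{m^*_\epsilon}$. *)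

(* classical reals. Sequences are nat -> R, indexed from 1
   (the value at index 0 is never used). *)
From Stdlib Require Import Reals Lra Lia.
Open Scope R_scope.

Definition Lambda (lam : nat -> R) (j : nat) : R := / (lam j ^ 2).

Fixpoint LamMax (lam : nat -> R) (m : nat) : R :=
  match m with
  | O => 0
  | S k => Rmax (LamMax lam k) (Lambda lam (S k))
  end.

Fixpoint sumLam (lam : nat -> R) (m : nat) : R :=
  match m with
  | O => 0
  | S k => sumLam lam k + Lambda lam (S k)
  end.

Definition LamBar (lam : nat -> R) (m : nat) : R := sumLam lam m / INR m.

Definition Phi (a lam : nat -> R) (eps : R) (m : nat) : R :=
  Rmax (a m) (eps * INR m * LamBar lam m).

Definition IsMstar (a lam : nat -> R) (eps : R) (m : nat) : Prop :=
  (1 <= m)%nat /\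
  (forall k, (1 <= k)%nat -> Phi a lam eps m <= Phi a lam eps k) /\
  (forall m', (1 <= m')%nat ->
     (forall k, (1 <= k)%nat -> Phi a lam eps m' <= Phi a lam eps k) ->
     (m <= m')%nat).

(* Phi*_eps = Phi(m*_eps) *)

Definition IsG (lam : nat -> R) (eps : R) (G : nat) : Prop :=
  (1 <= G)%nat /\ (Z.of_nat G <= Int_part (/ eps))%Z /\
  eps * LamMax lam G <= Lambda lam 1 /\
  (forall m, (1 <= m)%nat -> (Z.of_nat m <= Int_part (/ eps))%Z ->
     eps * LamMax lam m <= Lambda lam 1 -> (m <= G)%nat).

(* Assumption A with constant d; tau eps j is the prior variance tau_j
   (allowed to depend on eps). *)
Definition AssumptionA (lam : nat -> R) (tau : R -> nat -> R) (d : R) : Prop :=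
  0 < d /\
  forall eps, 0 < eps < 1 ->
  forall G, IsG lam eps G ->
  forall j, (1 <= j <= G)%nat ->
    tau eps j >= d * Rmax (sqrt eps * sqrt (Lambda lam j)) (eps * Lambda lam j).

Definition sigma (lam : nat -> R) (tau : R -> nat -> R) (eps : R) (j : nat) : R :=
  / (lam j ^ 2 / eps + / tau eps j).

(* theta^Y_j as a function of the observation Y_j = y *)
Definition thetaY (lam eta : nat -> R) (tau : R -> nat -> R) (eps : R)
  (j : nat) (y : R) : R :=
  sigma lam tau eps j * (/ tau eps j * eta j + lam j / eps * y).

(* j-th coordinate of the Bayes estimator hat theta^m, when the true
   parameter is theta0 and the j-th noise variable xi_j takes value x
   (so Y_j = lambda_j theta0_j + sqrt eps x). *)
Definition thetaHat (m : nat) (lam eta : nat -> R) (tau : R -> nat -> R)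
  (eps : R) (theta0 : nat -> R) (j : nat) (x : R) : R :=
  if (j <=? m)%nat then thetaY lam eta tau eps j (lam j * theta0 j + sqrt eps * x)
  else eta j.

Definition gauss (x : R) : R := exp (- (x ^ 2) / 2) / sqrt (2 * PI).

(* E[f(xi)] = v for xi ~ N(0,1), as the improper Riemann integral
   lim_n int_{-n}^{n} f(x) phi(x) dx *)
Definition GaussExpIs (f : R -> R) (v : R) : Prop :=
  exists pr : forall n : nat,
      Riemann_integrable (fun x => f x * gauss x) (- INR n) (INR n),
    Un_cv (fun n => RiemannInt (pr n)) v.

Definition InEllipsoid (a eta : nat -> R) (r : R) (theta : nat -> R) : Prop :=
  exists s, infinite_sum (fun k => (theta (S k) - eta (S k)) ^ 2 / a (S k)) s
            /\ s <= r.

(* E_{theta0} || hat theta^m - theta0 ||^2 = v, computed as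
   sum_{j>=1} E (hat theta^m_j - theta0_j)^2 (each coordinate depends only
   on xi_j); the series must converge to v. *)
Definition RiskIs (m : nat) (lam eta : nat -> R) (tau : R -> nat -> R)
  (eps : R) (theta0 : nat -> R) (v : R) : Prop :=
  exists E : nat -> R,
    (forall j, (1 <= j)%nat ->
       GaussExpIs (fun x => (thetaHat m lam eta tau eps theta0 j x - theta0 j) ^ 2) (E j))
    /\ infinite_sum (fun k => E (S k)) v.

(* On each coordinate j <= m the error of the Bayes estimator is affine in the noise,
   shrink_j (eta_j - theta_j) + noise_j xi_j, so its risk is
   shrink_j^2 (eta_j - theta_j)^2 + noise_j^2; beyond m it is the squared bias.  The variance
   term is at most eps Lambda_j, and Assumption A (tau_j >= d sqrt (eps Lambda_j)) bounds the
   bias factor by eps Lambda_j / d^2.  For eps small the minimax dimension m* lies below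
   G_eps, so Assumption A applies to all j <= m*; summing against the ellipsoid weights and
   using eps m* barLambda_m* <= Phi* and a_j <= a_m* <= Phi* for j > m* gives the bound.
   The Gaussian second moment E (c + s xi)^2 = c^2 + s^2 rests on the Gaussian integral:
   2 int_0^1 exp(-x^2 (1+t^2)/2) / (1+t^2) dt + (int_0^x exp(-u^2/2) du)^2 is constant in x,
   equal to 2 atan 1 = pi/2 at x = 0, and its first part vanishes as x -> oo. *)

From Stdlib Require Import Reals Lra Lia.
From Coquelicot Require Import Coquelicot.
Open Scope R_scope.

Definition gauss_kernel (x : R) : R := exp (- (x * x) / 2).

Definition gauss_mass (x : R) : R := RInt gauss_kernel 0 x.

Definition arctan_kernel (x t : R) : R := exp (- (x * x * (1 + t * t)) / 2) / (1 + t * t).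

Definition gauss_invariant (x : R) : R :=
  2 * RInt (arctan_kernel x) 0 1 + gauss_mass x * gauss_mass x.

Lemma one_plus_sq_pos t : 0 < 1 + t * t.
Proof. nra. Qed.

Lemma exp_le_1 y : y <= 0 -> exp y <= 1.
Proof.
  intros [Hy | ->]; [| rewrite exp_0; lra].
  left. rewrite <- exp_0. apply exp_increasing, Hy.
Qed.

Lemma gauss_kernel_pos x : 0 < gauss_kernel x.
Proof. apply exp_pos. Qed.

Lemma gauss_kernel_opp x : gauss_kernel (- x) = gauss_kernel x.
Proof. unfold gauss_kernel. replace (- x * - x) with (x * x) by ring. reflexivity. Qed.

Lemma gauss_kernel_continuous x : continuous gauss_kernel x.
Proof. apply (ex_derive_continuous (V := R_NormedModule)). unfold gauss_kernel. auto_derive. auto. Qed.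

Lemma ex_RInt_gauss_kernel a b : ex_RInt gauss_kernel a b.
Proof. apply (ex_RInt_continuous (V := R_CompleteNormedModule)). intros. apply gauss_kernel_continuous. Qed.

Lemma ex_RInt_arctan_kernel x a b : ex_RInt (arctan_kernel x) a b.
Proof.
  apply (ex_RInt_continuous (V := R_CompleteNormedModule)); intros t _.
  apply (ex_derive_continuous (V := R_NormedModule)). unfold arctan_kernel.
  auto_derive. generalize (one_plus_sq_pos t). lra.
Qed.

Lemma is_derive_arctan_kernel x t :
  is_derive (fun z => arctan_kernel z t) x (- x * gauss_kernel x * gauss_kernel (t * x)).
Proof.
  unfold arctan_kernel, gauss_kernel. auto_derive. { generalize (one_plus_sq_pos t); lra. }
  rewrite (Rmult_assoc (- x)), <- exp_plus.
  replace (- (x * x) / 2 + - (t * x * (t * x)) / 2) with (- (x * x * (1 + t * t)) * / 2)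
    by (unfold Rdiv; ring).
  field. generalize (one_plus_sq_pos t); lra.
Qed.

Lemma continuity_2d_pt_arctan_kernel_deriv x t :
  continuity_2d_pt (fun u v => - u * gauss_kernel u * gauss_kernel (v * u)) x t.
Proof.
  assert (Hk : forall y, continuity_pt gauss_kernel y).
  { intros y. apply continuity_pt_filterlim, gauss_kernel_continuous. }
  apply continuity_2d_pt_mult; [apply continuity_2d_pt_mult|].
  - apply continuity_2d_pt_opp, continuity_2d_pt_id1.
  - apply (continuity_1d_2d_pt_comp gauss_kernel (fun u v => u)); auto.
    apply continuity_2d_pt_id1.
  - apply (continuity_1d_2d_pt_comp gauss_kernel (fun u v => v * u)); auto.
    apply continuity_2d_pt_mult; [apply continuity_2d_pt_id2 | apply continuity_2d_pt_id1].
Qed.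

Lemma is_derive_gauss_mass x : is_derive gauss_mass x (gauss_kernel x).
Proof.
  apply (is_derive_RInt (V := R_CompleteNormedModule) gauss_kernel gauss_mass 0 x).
  - exists (mkposreal 1 Rlt_0_1). intros y _. apply RInt_correct, ex_RInt_gauss_kernel.
  - apply gauss_kernel_continuous.
Qed.

(* Substituting [s = x t] turns the [x]-derivative of the arctan part into
   [- gauss_kernel x * gauss_mass x]. *)
Lemma is_derive_RInt_arctan_kernel x :
  is_derive (fun z => RInt (arctan_kernel z) 0 1) x (- gauss_kernel x * gauss_mass x).
Proof.
  assert (Hderiv : RInt (fun t => Derive (fun u => arctan_kernel u t) x) 0 1
                   = - gauss_kernel x * gauss_mass x).
  { rewrite (RInt_ext _ (fun t => scal (- gauss_kernel x) (scal x (gauss_kernel (x * t + 0))))).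
    2:{ intros t _. rewrite (is_derive_unique (fun u : R => arctan_kernel u t) x _ (is_derive_arctan_kernel x t)).
        unfold scal; simpl; unfold mult; simpl. rewrite Rplus_0_r, (Rmult_comm t x). ring. }
    rewrite (RInt_scal (V := R_CompleteNormedModule)).
    2:{ apply (ex_RInt_ext (fun t => scal x (gauss_kernel (x * t + 0)))); [reflexivity|].
        apply (ex_RInt_comp_lin gauss_kernel), ex_RInt_gauss_kernel. }
    transitivity (scal (- gauss_kernel x) (RInt gauss_kernel (x * 0 + 0) (x * 1 + 0))).
    { f_equal. exact (RInt_comp_lin gauss_kernel x 0 0 1 (ex_RInt_gauss_kernel _ _)). }
    unfold gauss_mass, scal; simpl; unfold mult; simpl. do 3 f_equal; ring. }
  rewrite <- Hderiv.
  apply (is_derive_RInt_param arctan_kernel).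
  - exists (mkposreal 1 Rlt_0_1). intros y _ t _. eexists. apply is_derive_arctan_kernel.
  - intros t _.
    apply (continuity_2d_pt_ext (fun u v => - u * gauss_kernel u * gauss_kernel (v * u))).
    + intros; symmetry; apply is_derive_unique, is_derive_arctan_kernel.
    + apply continuity_2d_pt_arctan_kernel_deriv.
  - exists (mkposreal 1 Rlt_0_1). intros y _. apply ex_RInt_arctan_kernel.
Qed.

Lemma is_derive_gauss_invariant x : is_derive gauss_invariant x 0.
Proof.
  replace 0 with (plus (2 * (- gauss_kernel x * gauss_mass x))
                   (plus (mult (gauss_kernel x) (gauss_mass x)) (mult (gauss_mass x) (gauss_kernel x)))).
  2:{ unfold plus, mult; simpl; unfold plus, mult; simpl. ring. }
  apply (is_derive_plus (K := R_AbsRing) (V := R_NormedModule)).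
  - apply is_derive_scal, is_derive_RInt_arctan_kernel.
  - apply (is_derive_mult (K := R_AbsRing)); try apply is_derive_gauss_mass.
    intros; apply Rmult_comm.
Qed.

Lemma gauss_invariant_const x : gauss_invariant x = gauss_invariant 0.
Proof.
  destruct (MVT_gen gauss_invariant 0 x (fun _ => 0)) as [c [_ Hc]].
  - intros; apply is_derive_gauss_invariant.
  - intros; apply continuity_pt_filterlim, (ex_derive_continuous (V := R_NormedModule)).
    eexists; apply is_derive_gauss_invariant.
  - lra.
Qed.

Lemma arctan_kernel_0 t : arctan_kernel 0 t = / (1 + t ^ 2).
Proof.
  unfold arctan_kernel. replace (- (0 * 0 * (1 + t * t)) / 2) with 0 by field.
  rewrite exp_0. field. generalize (one_plus_sq_pos t); lra.
Qed.

Lemma gauss_invariant_0 : gauss_invariant 0 = PI / 2.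
Proof.
  unfold gauss_invariant, gauss_mass. rewrite RInt_point. unfold zero; simpl.
  rewrite (RInt_ext (arctan_kernel 0) (fun t => / (1 + t ^ 2))).
  2:{ intros t _. apply arctan_kernel_0. }
  assert (Hatan : is_RInt (fun t => / (1 + t ^ 2)) 0 1 (minus (atan 1) (atan 0))).
  { apply (is_RInt_derive (V := R_CompleteNormedModule) atan).
    - intros; apply is_derive_Reals, derivable_pt_lim_atan.
    - intros t _. apply (ex_derive_continuous (V := R_NormedModule)). auto_derive.
      generalize (one_plus_sq_pos t); nra. }
  rewrite (is_RInt_unique _ _ _ _ Hatan), atan_1, atan_0.
  unfold minus, plus, opp; simpl; unfold plus, opp; simpl. field.
Qed.

Lemma RInt_arctan_kernel_bounds x : 0 <= RInt (arctan_kernel x) 0 1 <= gauss_kernel x.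
Proof.
  split.
  - apply RInt_ge_0; [lra | apply ex_RInt_arctan_kernel |]. intros t _.
    apply Rle_mult_inv_pos; [apply Rlt_le, exp_pos | apply one_plus_sq_pos].
  - replace (gauss_kernel x) with (RInt (fun _ => gauss_kernel x) 0 1)
      by (rewrite RInt_const; unfold scal; simpl; unfold mult; simpl; ring).
    apply RInt_le; [lra | apply ex_RInt_arctan_kernel
                   | apply (ex_RInt_const (V := R_CompleteNormedModule)) |].
    intros t _. unfold arctan_kernel.
    replace (- (x * x * (1 + t * t)) / 2) with (- (x * x) / 2 + - (t * x * (t * x)) / 2) by field.
    rewrite exp_plus. fold (gauss_kernel x).
    assert (Hk := gauss_kernel_pos x).
    assert (exp (- (t * x * (t * x)) / 2) <= 1).
    { apply exp_le_1. nra. }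
    assert (0 < exp (- (t * x * (t * x)) / 2)) by apply exp_pos.
    apply Rle_div_l; [apply one_plus_sq_pos | nra].
Qed.

Lemma succ_mul_gauss_kernel_le x : 0 <= x -> (x + 1) * gauss_kernel x <= 4 / (x + 1).
Proof.
  intros Hx. unfold gauss_kernel.
  replace (- (x * x) / 2) with (- (x * x / 2)) by field. rewrite exp_Ropp.
  assert (Hexp := exp_ineq1_le (x * x / 2)).
  assert (0 < exp (x * x / 2)) by apply exp_pos.
  apply (Rmult_le_reg_r ((x + 1) * exp (x * x / 2))); [apply Rmult_lt_0_compat; lra|].
  replace ((x + 1) * / exp (x * x / 2) * ((x + 1) * exp (x * x / 2))) with ((x + 1) ^ 2)
    by (field; lra).
  replace (4 / (x + 1) * ((x + 1) * exp (x * x / 2))) with (4 * exp (x * x / 2)) by (field; lra).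
  assert (0 <= (x - 1) ^ 2) by apply pow2_ge_0. nra.
Qed.

Lemma is_lim_seq_div_succ (c : R) : is_lim_seq (fun n => c / (INR n + 1)) 0.
Proof.
  replace 0 with (c * 0) by ring.
  apply is_lim_seq_mult'; [apply is_lim_seq_const|].
  assert (Hinv := is_lim_seq_inv _ _ (proj1 (is_lim_seq_incr_1 INR p_infty) is_lim_seq_INR)).
  apply (is_lim_seq_ext (fun n => / INR (S n))); [intros n; rewrite S_INR; reflexivity|].
  apply Hinv. discriminate.
Qed.

Lemma is_lim_seq_succ_mul_gauss_kernel :
  is_lim_seq (fun n => (INR n + 1) * gauss_kernel (INR n)) 0.
Proof.
  apply (is_lim_seq_le_le (fun _ => 0) _ (fun n => 4 / (INR n + 1))).
  - intros n. split.
    + apply Rmult_le_pos; [generalize (pos_INR n); lra | apply Rlt_le, gauss_kernel_pos].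
    + apply succ_mul_gauss_kernel_le, pos_INR.
  - apply is_lim_seq_const.
  - apply is_lim_seq_div_succ.
Qed.

Lemma is_lim_seq_le_succ_mul_gauss_kernel (u : nat -> R) :
  (forall n, 0 <= u n <= (INR n + 1) * gauss_kernel (INR n)) -> is_lim_seq u 0.
Proof.
  intros Hu. apply (is_lim_seq_le_le (fun _ => 0) _ _ _ Hu).
  - apply is_lim_seq_const.
  - apply is_lim_seq_succ_mul_gauss_kernel.
Qed.

Lemma gauss_mass_nonneg x : 0 <= x -> 0 <= gauss_mass x.
Proof.
  intros Hx. apply RInt_ge_0; auto using ex_RInt_gauss_kernel.
  intros. apply Rlt_le, gauss_kernel_pos.
Qed.

Lemma is_lim_seq_gauss_mass : is_lim_seq (fun n => gauss_mass (INR n)) (sqrt (PI / 2)).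
Proof.
  assert (Harctan : is_lim_seq (fun n => RInt (arctan_kernel (INR n)) 0 1) 0).
  { apply is_lim_seq_le_succ_mul_gauss_kernel. intros n.
    destruct (RInt_arctan_kernel_bounds (INR n)) as [H0 H1]. split; [exact H0|].
    assert (Hk := gauss_kernel_pos (INR n)). generalize (pos_INR n). nra. }
  assert (Hsq : is_lim_seq (fun n => gauss_mass (INR n) * gauss_mass (INR n)) (PI / 2)).
  { apply (is_lim_seq_ext (fun n => PI / 2 - 2 * RInt (arctan_kernel (INR n)) 0 1)).
    { intros n. assert (Hinv := gauss_invariant_const (INR n)).
      rewrite gauss_invariant_0 in Hinv. unfold gauss_invariant in Hinv. lra. }
    assert (Hlim := is_lim_seq_minus' _ _ _ _ (is_lim_seq_const (PI / 2))
                      (is_lim_seq_mult' _ _ _ _ (is_lim_seq_const 2) Harctan)).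
    rewrite Rmult_0_r, Rminus_0_r in Hlim. exact Hlim. }
  apply (is_lim_seq_ext (fun n => sqrt (gauss_mass (INR n) * gauss_mass (INR n)))).
  { intros n. apply sqrt_square, gauss_mass_nonneg, pos_INR. }
  apply is_lim_seq_continuous; [apply continuity_pt_sqrt; generalize PI_RGT_0; lra | exact Hsq].
Qed.

Lemma RInt_gauss_kernel_sym X : RInt gauss_kernel (- X) X = 2 * gauss_mass X.
Proof.
  assert (Hneg : RInt gauss_kernel 0 (- X) = - gauss_mass X).
  { transitivity (RInt gauss_kernel (-1 * 0 + 0) (-1 * X + 0)); [f_equal; ring|].
    rewrite <- (RInt_comp_lin (V := R_CompleteNormedModule) gauss_kernel (-1) 0 0 X)
      by apply ex_RInt_gauss_kernel.
    rewrite (RInt_ext _ (fun y => opp (gauss_kernel y))).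
    - rewrite (RInt_opp (V := R_CompleteNormedModule)); [reflexivity | apply ex_RInt_gauss_kernel].
    - intros y _. unfold scal, opp; simpl; unfold mult, opp; simpl.
      replace (-1 * y + 0) with (- y) by ring. rewrite gauss_kernel_opp. ring. }
  rewrite <- (RInt_Chasles (V := R_CompleteNormedModule) gauss_kernel (- X) 0 X)
    by apply ex_RInt_gauss_kernel.
  rewrite <- (opp_RInt_swap (V := R_CompleteNormedModule) gauss_kernel 0 (- X))
    by apply ex_RInt_gauss_kernel.
  rewrite Hneg. unfold gauss_mass, plus, opp; simpl; unfold plus, opp; simpl. ring.
Qed.

Lemma is_lim_seq_RInt_gauss_kernel :
  is_lim_seq (fun n => RInt gauss_kernel (- INR n) (INR n)) (sqrt (2 * PI)).
Proof.
  apply (is_lim_seq_ext (fun n => 2 * gauss_mass (INR n))).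
  { intros n. symmetry. apply RInt_gauss_kernel_sym. }
  replace (sqrt (2 * PI)) with (2 * sqrt (PI / 2)).
  - apply is_lim_seq_mult'; [apply is_lim_seq_const | apply is_lim_seq_gauss_mass].
  - replace (2 * PI) with (2 * 2 * (PI / 2)) by field. generalize PI_RGT_0; intro.
    rewrite sqrt_mult, sqrt_square; lra.
Qed.

Lemma is_RInt_congr (f g : R -> R) (a b u v : R) :
  (forall x, f x = g x) -> u = v -> is_RInt f a b u -> is_RInt g a b v.
Proof. intros Hfg <- Hf. apply (is_RInt_ext f); auto. Qed.

(* [(c + s x)^2 e^{-x^2/2} = (c^2 + s^2) e^{-x^2/2} + d/dx (-(2 c s + s^2 x) e^{-x^2/2})] *)
Lemma is_RInt_affine_sq_gauss_kernel c s X :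
  is_RInt (fun x => (c + s * x) ^ 2 * gauss_kernel x) (- X) X
    ((c ^ 2 + s ^ 2) * RInt gauss_kernel (- X) X - 2 * s ^ 2 * X * gauss_kernel X).
Proof.
  assert (Hexact : is_RInt (fun x => ((c + s * x) ^ 2 - (c ^ 2 + s ^ 2)) * gauss_kernel x) (- X) X
     (minus (- (2 * c * s + s ^ 2 * X) * gauss_kernel X)
            (- (2 * c * s + s ^ 2 * - X) * gauss_kernel (- X)))).
  { apply (is_RInt_derive (V := R_CompleteNormedModule)
             (fun x => - (2 * c * s + s ^ 2 * x) * gauss_kernel x)).
    - intros x _. unfold gauss_kernel. auto_derive; [auto|].
      match goal with |- ?u = ?v => change (@eq R u v) end. unfold Rdiv. field.
    - intros x _. apply (ex_derive_continuous (V := R_NormedModule)).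
      unfold gauss_kernel. auto_derive. auto. }
  assert (Hsum := is_RInt_plus (V := R_NormedModule) _ _ _ _ _ _ Hexact
    (is_RInt_scal (V := R_NormedModule) _ _ _ (c ^ 2 + s ^ 2) _
       (RInt_correct (V := R_CompleteNormedModule) _ _ _ (ex_RInt_gauss_kernel (- X) X)))).
  refine (is_RInt_congr _ _ _ _ _ _ _ _ Hsum).
  - intros x. unfold plus, scal; simpl; unfold plus, mult; simpl. ring.
  - rewrite gauss_kernel_opp. unfold minus, plus, opp, scal; simpl; unfold plus, opp, mult; simpl.
    ring.
Qed.

Lemma gauss_eq x : gauss x = gauss_kernel x / sqrt (2 * PI).
Proof. unfold gauss, gauss_kernel. replace (x ^ 2) with (x * x) by ring. reflexivity. Qed.

Lemma GaussExpIs_affine_sq (f : R -> R) (c s : R) :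
  (forall x, f x = (c + s * x) ^ 2) -> GaussExpIs f (c ^ 2 + s ^ 2).
Proof.
  intros Hf.
  set (K := sqrt (2 * PI)).
  assert (HK : 0 < K) by (apply sqrt_lt_R0; generalize PI_RGT_0; lra).
  set (V := fun X => ((c ^ 2 + s ^ 2) * RInt gauss_kernel (- X) X
                      - 2 * s ^ 2 * (X * gauss_kernel X)) * / K).
  assert (HV : forall X, is_RInt (fun x => f x * gauss x) (- X) X (V X)).
  { intros X. refine (is_RInt_congr _ _ _ _ _ _ _ _ (is_RInt_scal (V := R_NormedModule)
      _ _ _ (/ K) _ (is_RInt_affine_sq_gauss_kernel c s X))).
    - intros x. rewrite Hf, gauss_eq. unfold scal; simpl; unfold mult; simpl. fold K. field. lra.
    - unfold V, scal; simpl; unfold mult; simpl. ring. }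
  exists (fun n => ex_RInt_Reals_0 _ _ _ (ex_intro _ _ (HV (INR n)))).
  apply is_lim_seq_Reals, (is_lim_seq_ext (fun n => V (INR n))).
  { intros n. rewrite <- RInt_Reals. symmetry. apply is_RInt_unique, HV. }
  assert (Htail : is_lim_seq (fun n => INR n * gauss_kernel (INR n)) 0).
  { apply is_lim_seq_le_succ_mul_gauss_kernel. intros n.
    assert (Hk := gauss_kernel_pos (INR n)). generalize (pos_INR n). split; nra. }
  assert (Hlim := is_lim_seq_mult' _ _ _ _
    (is_lim_seq_minus' _ _ _ _
       (is_lim_seq_mult' _ _ _ _ (is_lim_seq_const (c ^ 2 + s ^ 2)) is_lim_seq_RInt_gauss_kernel)
       (is_lim_seq_mult' _ _ _ _ (is_lim_seq_const (2 * s ^ 2)) Htail))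
    (is_lim_seq_const (/ K))).
  replace (c ^ 2 + s ^ 2) with (((c ^ 2 + s ^ 2) * K - 2 * s ^ 2 * 0) * / K) by (field; lra).
  exact Hlim.
Qed.

Definition shrink_coef (l t e : R) : R := e / (l ^ 2 * t + e).

Definition noise_coef (l t e : R) : R := sqrt e * l * t / (l ^ 2 * t + e).

Lemma thetaHat_error_le m lam eta tau eps theta0 j x :
  0 < eps -> 0 < tau eps j -> lam j <> 0 -> (j <= m)%nat ->
  thetaHat m lam eta tau eps theta0 j x - theta0 j
  = shrink_coef (lam j) (tau eps j) eps * (eta j - theta0 j)
    + noise_coef (lam j) (tau eps j) eps * x.
Proof.
  intros He Ht Hl Hjm. unfold thetaHat.
  replace (j <=? m)%nat with true by (symmetry; apply Nat.leb_le; exact Hjm).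
  assert (HL := pow2_gt_0 _ Hl).
  assert (0 < lam j ^ 2 * tau eps j) by (apply Rmult_lt_0_compat; lra).
  unfold thetaY, sigma, shrink_coef, noise_coef. field. repeat split; lra.
Qed.

Lemma thetaHat_error_gt m lam eta tau eps theta0 j x :
  (m < j)%nat -> thetaHat m lam eta tau eps theta0 j x - theta0 j = (eta j - theta0 j) + 0 * x.
Proof.
  intros Hjm. unfold thetaHat.
  replace (j <=? m)%nat with false by (symmetry; apply Nat.leb_gt; exact Hjm). ring.
Qed.

Lemma noise_coef_sq_le l t e : 0 < e -> 0 < t -> l <> 0 -> noise_coef l t e ^ 2 <= e * / l ^ 2.
Proof.
  intros He Ht Hl. assert (HL := pow2_gt_0 _ Hl).
  assert (0 < l ^ 2 * t) by (apply Rmult_lt_0_compat; lra).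
  unfold noise_coef.
  replace ((sqrt e * l * t / (l ^ 2 * t + e)) ^ 2)
    with (e * / l ^ 2 * ((l ^ 2 * t) ^ 2 / (l ^ 2 * t + e) ^ 2)).
  2:{ rewrite <- (sqrt_sqrt e) at 1 by lra. field. lra. }
  rewrite <- (Rmult_1_r (e * / l ^ 2)) at 2.
  apply Rmult_le_compat_l; [apply Rmult_le_pos; [lra | apply Rlt_le, Rinv_0_lt_compat; lra]|].
  apply Rle_div_l; [apply pow_lt; lra|]. rewrite Rmult_1_l.
  apply pow_incr. lra.
Qed.

(* Only the [sqrt (eps Lambda_j)] half of Assumption A is needed for the bias. *)
Lemma shrink_coef_sq_le l t e d : 0 < e -> 0 < t -> l <> 0 -> 0 < d ->
  d * (sqrt e * sqrt (/ l ^ 2)) <= t -> d ^ 2 * shrink_coef l t e ^ 2 <= e * / l ^ 2.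
Proof.
  intros He Ht Hl Hd Htd. assert (HL := pow2_gt_0 _ Hl).
  assert (HLt : 0 < l ^ 2 * t) by (apply Rmult_lt_0_compat; lra).
  assert (Ht2 : d ^ 2 * (e * / l ^ 2) <= t ^ 2).
  { replace (d ^ 2 * (e * / l ^ 2)) with ((d * (sqrt e * sqrt (/ l ^ 2))) ^ 2).
    - apply pow_incr. split; [|exact Htd].
      apply Rmult_le_pos; [lra | apply Rmult_le_pos; apply sqrt_pos].
    - assert (0 <= / l ^ 2) by (apply Rlt_le, Rinv_0_lt_compat; lra).
      rewrite !Rpow_mult_distr, !pow2_sqrt by lra. reflexivity. }
  assert (Hkey : d ^ 2 * e * l ^ 2 <= (l ^ 2 * t + e) ^ 2).
  { apply Rle_trans with ((l ^ 2 * t) ^ 2); [| apply pow_incr; lra].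
    replace (d ^ 2 * e * l ^ 2) with (d ^ 2 * (e * / l ^ 2) * (l ^ 2 * l ^ 2)) by (field; lra).
    replace ((l ^ 2 * t) ^ 2) with (t ^ 2 * (l ^ 2 * l ^ 2)) by ring.
    apply Rmult_le_compat_r; [nra | exact Ht2]. }
  unfold shrink_coef.
  replace (d ^ 2 * (e / (l ^ 2 * t + e)) ^ 2) with (e * / l ^ 2 * (d ^ 2 * e * l ^ 2 / (l ^ 2 * t + e) ^ 2))
    by (field; lra).
  rewrite <- (Rmult_1_r (e * / l ^ 2)) at 2.
  apply Rmult_le_compat_l; [apply Rmult_le_pos; [lra | apply Rlt_le, Rinv_0_lt_compat; lra]|].
  apply Rle_div_l; [apply pow_lt; lra | lra].
Qed.

Definition coord_risk m lam eta tau eps theta0 j : R :=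
  if (j <=? m)%nat
  then (shrink_coef (lam j) (tau eps j) eps * (eta j - theta0 j)) ^ 2
       + noise_coef (lam j) (tau eps j) eps ^ 2
  else (eta j - theta0 j) ^ 2.

Lemma GaussExpIs_coord_risk m lam eta tau eps theta0 j :
  0 < eps -> 0 < tau eps j -> lam j <> 0 ->
  GaussExpIs (fun x => (thetaHat m lam eta tau eps theta0 j x - theta0 j) ^ 2)
    (coord_risk m lam eta tau eps theta0 j).
Proof.
  intros He Ht Hl. unfold coord_risk. destruct (Nat.leb_spec j m) as [Hjm | Hjm].
  - apply GaussExpIs_affine_sq. intros x. rewrite thetaHat_error_le by assumption. reflexivity.
  - replace ((eta j - theta0 j) ^ 2) with ((eta j - theta0 j) ^ 2 + 0 ^ 2) by ring.
    apply GaussExpIs_affine_sq. intros x. rewrite thetaHat_error_gt by assumption. reflexivity.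
Qed.

Lemma Lambda_nonneg lam j : 0 <= Lambda lam j.
Proof.
  unfold Lambda. destruct (Req_dec (lam j) 0) as [-> | Hl].
  - rewrite pow_i, Rinv_0 by lia. lra.
  - apply Rlt_le, Rinv_0_lt_compat, pow2_gt_0, Hl.
Qed.

Lemma sumLam_nonneg lam m : 0 <= sumLam lam m.
Proof. induction m as [|m IH]; simpl; [lra|]. generalize (Lambda_nonneg lam (S m)); lra. Qed.

Lemma LamMax_le_sumLam lam m : LamMax lam m <= sumLam lam m.
Proof.
  induction m as [|m IH]; simpl; [lra|].
  generalize (Lambda_nonneg lam (S m)) (sumLam_nonneg lam m). intros. apply Rmax_lub; lra.
Qed.

Lemma Lambda_le_LamMax lam m j : (1 <= j <= m)%nat -> Lambda lam j <= LamMax lam m.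
Proof.
  induction m as [|m IH]; intros Hj; [lia|]. simpl.
  destruct (Nat.eq_dec j (S m)) as [-> | Hne]; [apply Rmax_r|].
  eapply Rle_trans; [apply IH; lia | apply Rmax_l].
Qed.

Lemma INR_mul_LamBar lam m : (1 <= m)%nat -> INR m * LamBar lam m = sumLam lam m.
Proof. intros Hm. unfold LamBar. field. apply not_0_INR. lia. Qed.

Lemma sumLam_ge lam B m : 0 < B ->
  (forall j, (1 <= j)%nat -> lam j <> 0) -> (forall j, (1 <= j)%nat -> Rabs (lam j) <= B) ->
  INR m / B ^ 2 <= sumLam lam m.
Proof.
  intros HB Hlam Hbound. induction m as [|m IH]; simpl sumLam; [simpl INR; unfold Rdiv; lra|].
  assert (/ B ^ 2 <= Lambda lam (S m)).
  { apply Rinv_le_contravar; [apply pow2_gt_0, Hlam; lia|].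
    rewrite <- pow2_abs. apply pow_incr. split; [apply Rabs_pos | apply Hbound; lia]. }
  rewrite S_INR. unfold Rdiv in *. lra.
Qed.

Definition trunc_Lambda lam m j : R := if (j <=? m)%nat then Lambda lam j else 0.

Lemma sum_n_trunc_Lambda lam m n :
  sum_n (fun k => trunc_Lambda lam m (S k)) n = sumLam lam (Nat.min (S n) m).
Proof.
  induction n as [|n IH].
  - rewrite sum_O. unfold trunc_Lambda. destruct m as [|m]; simpl; [reflexivity|].
    replace (Nat.min 1 (S m)) with 1%nat by lia. simpl. ring.
  - rewrite sum_Sn, IH. unfold trunc_Lambda.
    destruct (Nat.leb_spec (S (S n)) m) as [Hle | Hgt].
    + replace (Nat.min (S (S n)) m) with (S (S n)) by lia.
      replace (Nat.min (S n) m) with (S n) by lia. reflexivity.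
    + replace (Nat.min (S (S n)) m) with m by lia.
      replace (Nat.min (S n) m) with m by lia. unfold plus; simpl. ring.
Qed.

Lemma is_series_trunc_Lambda lam m :
  is_series (fun k => trunc_Lambda lam m (S k)) (sumLam lam m).
Proof.
  unfold is_series. apply (filterlim_ext_loc (fun _ => sumLam lam m)).
  - exists m. intros n Hn. rewrite sum_n_trunc_Lambda.
    replace (Nat.min (S n) m) with m by lia. reflexivity.
  - apply filterlim_const.
Qed.

Lemma is_series_le_bound (u b : nat -> R) (l : R) :
  (forall k, 0 <= u k <= b k) -> is_series b l -> exists v, is_series u v /\ v <= l.
Proof.
  intros Hub Hb.
  assert (Hu : ex_series u).
  { apply (ex_series_le (V := R_CompleteNormedModule) u b); [| exists l; exact Hb].
    intros k. unfold norm; simpl; unfold abs; simpl. rewrite Rabs_pos_eq; apply Hub. }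
  exists (Series u). split; [apply Series_correct, Hu|].
  rewrite <- (is_series_unique b l Hb). apply Series_le; [exact Hub | exists l; exact Hb].
Qed.

Section BayesRisk.

Variables (lam a eta theta0 : nat -> R) (tau : R -> nat -> R) (eps d Phi_m s : R) (m : nat).

Hypothesis Heps : 0 < eps.
Hypothesis Hd : 0 < d.
Hypothesis Htau : forall j, (1 <= j)%nat -> 0 < tau eps j.
Hypothesis Hlam : forall j, (1 <= j)%nat -> lam j <> 0.
Hypothesis Ha : forall j, (1 <= j)%nat -> 0 < a j <= 1.
Hypothesis Htau_ge : forall j, (1 <= j <= m)%nat ->
  d * (sqrt eps * sqrt (Lambda lam j)) <= tau eps j.
Hypothesis Hhead : eps * sumLam lam m <= Phi_m.
Hypothesis Htail : forall j, (m < j)%nat -> a j <= Phi_m.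
Hypothesis Hs : infinite_sum (fun k => (theta0 (S k) - eta (S k)) ^ 2 / a (S k)) s.

Let weight j := (theta0 j - eta j) ^ 2 / a j.

Lemma weight_nonneg j : (1 <= j)%nat -> 0 <= weight j.
Proof.
  intros Hj. apply Rle_mult_inv_pos; [apply pow2_ge_0 | apply Ha, Hj].
Qed.

Lemma eps_Lambda_le j : (1 <= j <= m)%nat -> eps * Lambda lam j <= Phi_m.
Proof.
  intros Hj. eapply Rle_trans; [| exact Hhead]. apply Rmult_le_compat_l; [lra|].
  eapply Rle_trans; [apply Lambda_le_LamMax, Hj | apply LamMax_le_sumLam].
Qed.

Lemma Phi_m_pos : 0 < Phi_m.
Proof. generalize (Ha (S m) ltac:(lia)) (Htail (S m) ltac:(lia)). lra. Qed.

Lemma sq_dev_eq_weight j : (1 <= j)%nat -> (eta j - theta0 j) ^ 2 = a j * weight j.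
Proof. intros Hj. generalize (Ha j Hj). intros. unfold weight. field. lra. Qed.

Lemma coord_risk_le_head j : (1 <= j <= m)%nat ->
  coord_risk m lam eta tau eps theta0 j <= eps * Lambda lam j + Phi_m / d ^ 2 * weight j.
Proof.
  intros Hj. unfold coord_risk.
  replace (j <=? m)%nat with true by (symmetry; apply Nat.leb_le; lia).
  assert (Hnoise := noise_coef_sq_le (lam j) (tau eps j) eps Heps (Htau j ltac:(lia))
                      (Hlam j ltac:(lia))).
  assert (Hshrink := shrink_coef_sq_le (lam j) (tau eps j) eps d Heps (Htau j ltac:(lia))
                       (Hlam j ltac:(lia)) Hd (Htau_ge j Hj)).
  fold (Lambda lam j) in Hnoise, Hshrink.
  assert (Hcoef : shrink_coef (lam j) (tau eps j) eps ^ 2 <= Phi_m / d ^ 2).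
  { apply (Rle_div_r _ Phi_m (d ^ 2)); [apply pow_lt, Hd|].
    generalize (eps_Lambda_le j Hj). nra. }
  assert (HD : (eta j - theta0 j) ^ 2 <= weight j).
  { rewrite sq_dev_eq_weight by lia. generalize (Ha j ltac:(lia)) (weight_nonneg j ltac:(lia)). nra. }
  assert ((shrink_coef (lam j) (tau eps j) eps * (eta j - theta0 j)) ^ 2 <= Phi_m / d ^ 2 * weight j).
  { rewrite Rpow_mult_distr. apply Rmult_le_compat; auto using pow2_ge_0. }
  lra.
Qed.

Lemma coord_risk_le_tail j : (m < j)%nat -> coord_risk m lam eta tau eps theta0 j <= Phi_m * weight j.
Proof.
  intros Hj. unfold coord_risk.
  replace (j <=? m)%nat with false by (symmetry; apply Nat.leb_gt; lia).
  rewrite sq_dev_eq_weight by lia.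
  apply Rmult_le_compat_r; [apply weight_nonneg; lia | apply Htail, Hj].
Qed.

Lemma coord_risk_nonneg j : 0 <= coord_risk m lam eta tau eps theta0 j.
Proof.
  unfold coord_risk. destruct (j <=? m)%nat; [apply Rplus_le_le_0_compat|]; apply pow2_ge_0.
Qed.

Lemma coord_risk_le j : (1 <= j)%nat ->
  coord_risk m lam eta tau eps theta0 j
  <= eps * trunc_Lambda lam m j + Phi_m * (/ d ^ 2 + 1) * weight j.
Proof.
  intros Hj. assert (Hw := weight_nonneg j Hj). assert (HP := Phi_m_pos).
  assert (0 < / d ^ 2) by (apply Rinv_0_lt_compat, pow_lt, Hd).
  assert (0 <= Phi_m * / d ^ 2 * weight j) by (apply Rmult_le_pos; [apply Rmult_le_pos|]; lra).
  unfold trunc_Lambda. destruct (Nat.leb_spec j m).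
  - eapply Rle_trans; [apply coord_risk_le_head; lia|]. unfold Rdiv. nra.
  - eapply Rle_trans; [apply coord_risk_le_tail; lia|]. nra.
Qed.

Lemma RiskIs_le : exists v, RiskIs m lam eta tau eps theta0 v /\
  v <= eps * sumLam lam m + Phi_m * (/ d ^ 2 + 1) * s.
Proof.
  assert (Hbound : is_series
    (fun k => eps * trunc_Lambda lam m (S k) + Phi_m * (/ d ^ 2 + 1) * weight (S k))
    (eps * sumLam lam m + Phi_m * (/ d ^ 2 + 1) * s)).
  { apply (is_series_plus (V := R_NormedModule));
      apply (is_series_scal_l (V := R_NormedModule));
      [apply is_series_trunc_Lambda | apply is_series_Reals, Hs]. }
  destruct (is_series_le_bound (fun k => coord_risk m lam eta tau eps theta0 (S k)) _ _
    (fun k => conj (coord_risk_nonneg (S k)) (coord_risk_le (S k) ltac:(lia))) Hbound)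
    as [v [Hv Hvle]].
  exists v. split; [|exact Hvle].
  exists (coord_risk m lam eta tau eps theta0). split.
  - intros j Hj. apply GaussExpIs_coord_risk; auto.
  - apply is_series_Reals, Hv.
Qed.

End BayesRisk.

Lemma le_Int_part (z : Z) (x : R) : IZR z <= x -> (z <= Int_part x)%Z.
Proof.
  intros Hzx. destruct (base_Int_part x) as [_ Hfloor].
  destruct (Z.le_gt_cases z (Int_part x)) as [Hle | Hgt]; [exact Hle|].
  assert (Hz : IZR (Int_part x + 1) <= IZR z) by (apply IZR_le; lia).
  rewrite plus_IZR in Hz. lra.
Qed.

Lemma bounded_max_exists (P : nat -> Prop) (Pdec : forall n, {P n} + {~ P n}) (N : nat) :
  P 1%nat -> (1 <= N)%nat ->
  exists G, (1 <= G <= N)%nat /\ P G /\ forall n, (1 <= n <= N)%nat -> P n -> (n <= G)%nat.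
Proof.
  intros P1. induction N as [|N IH]; intros HN; [lia|].
  destruct (Nat.eq_dec N 0) as [-> | HN0].
  { exists 1%nat. repeat split; auto; intros; lia. }
  destruct IH as [G [HG [PG Hmax]]]; [lia|].
  destruct (Pdec (S N)) as [PSN | nPSN].
  - exists (S N). repeat split; auto; intros; lia.
  - exists G. split; [lia|]. split; [exact PG|]. intros n Hn Pn.
    destruct (Nat.eq_dec n (S N)) as [-> | Hne]; [contradiction | apply Hmax; auto; lia].
Qed.

Lemma IsG_exists lam eps : 0 < eps < 1 -> exists G, IsG lam eps G.
Proof.
  intros Heps.
  assert (Hinv : (1 <= Int_part (/ eps))%Z).
  { apply le_Int_part. apply (Rmult_le_reg_l eps); [lra|]. rewrite Rinv_r; lra. }
  destruct (bounded_max_exists (fun n => eps * LamMax lam n <= Lambda lam 1)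
              (fun n => Rle_dec _ _) (Z.to_nat (Int_part (/ eps)))) as [G [HG [PG Hmax]]].
  - simpl. generalize (Lambda_nonneg lam 1). intros. rewrite Rmax_right by lra. nra.
  - lia.
  - exists G. repeat split; [lia | lia | exact PG |]. intros n Hn1 Hn Pn. apply Hmax; auto. lia.
Qed.

Lemma eps_sumLam_le_Phi a lam eps m : (1 <= m)%nat -> eps * sumLam lam m <= Phi a lam eps m.
Proof. intros Hm. unfold Phi. rewrite Rmult_assoc, INR_mul_LamBar by exact Hm. apply Rmax_r. Qed.

(* Lambda_j >= 1/B^2 gives eps m <= B^2 Phi_m <= 1, and
   eps Lambda_(m) <= eps m barLambda_m <= Phi_m <= Lambda_1. *)
Lemma le_IsG a lam eps B G m : 0 < eps -> 0 < B ->
  (forall j, (1 <= j)%nat -> lam j <> 0) -> (forall j, (1 <= j)%nat -> Rabs (lam j) <= B) ->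
  IsG lam eps G -> (1 <= m)%nat -> Phi a lam eps m <= Rmin (Lambda lam 1) (/ B ^ 2) ->
  (m <= G)%nat.
Proof.
  intros Heps HB Hlam Hbound [_ [_ [_ Hmax]]] Hm HPhi.
  assert (HB2 : 0 < B ^ 2) by (apply pow_lt, HB).
  assert (Hsum := eps_sumLam_le_Phi a lam eps m Hm).
  generalize (Rmin_l (Lambda lam 1) (/ B ^ 2)) (Rmin_r (Lambda lam 1) (/ B ^ 2)). intros.
  apply Hmax; [exact Hm | |].
  - apply le_Int_part. rewrite <- INR_IZR_INZ.
    assert (Hm_le : eps * (INR m / B ^ 2) <= / B ^ 2).
    { apply Rle_trans with (eps * sumLam lam m); [| lra].
      apply Rmult_le_compat_l; [lra | apply sumLam_ge; assumption]. }
    apply (Rmult_le_reg_l eps); [exact Heps|]. rewrite Rinv_r by lra.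
    apply (Rmult_le_reg_r (/ B ^ 2)); [apply Rinv_0_lt_compat, HB2|].
    unfold Rdiv in Hm_le. lra.
  - apply Rle_trans with (eps * sumLam lam m); [| lra].
    apply Rmult_le_compat_l; [lra | apply LamMax_le_sumLam].
Qed.

Lemma Phi_le_eventually (a lam : nat -> R) (c : R) : 0 < c -> Un_cv a 0 ->
  exists eps_o K, 0 < eps_o < 1 /\ (1 <= K)%nat /\
    forall eps, 0 < eps < eps_o -> Phi a lam eps K <= c.
Proof.
  intros Hc Ha0. destruct (Ha0 c Hc) as [N HN].
  set (K := S N). set (S_K := sumLam lam K).
  assert (HS : 0 <= S_K) by apply sumLam_nonneg.
  exists (Rmin (1 / 2) (c / (S_K + 1))), K.
  assert (0 < c / (S_K + 1)) by (apply Rdiv_lt_0_compat; lra).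
  split; [split; [apply Rmin_glb_lt; lra | generalize (Rmin_l (1 / 2) (c / (S_K + 1))); lra]|].
  split; [unfold K; lia|].
  intros eps [Heps Heps_o]. unfold Phi. rewrite Rmult_assoc, INR_mul_LamBar by (unfold K; lia).
  apply Rmax_lub.
  - assert (HaK := HN K ltac:(unfold K; lia)). unfold Rdist in HaK.
    rewrite Rminus_0_r in HaK. apply Rabs_def2 in HaK. lra.
  - assert (Hle : eps <= c / (S_K + 1)) by (generalize (Rmin_r (1 / 2) (c / (S_K + 1))); lra).
    apply Rle_trans with (c / (S_K + 1) * S_K); [apply Rmult_le_compat_r; lra|].
    apply (Rmult_le_reg_r (S_K + 1)); [lra|].
    replace (c / (S_K + 1) * S_K * (S_K + 1)) with (c * S_K) by (field; lra). nra.
Qed.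

Lemma risk_budget (head Phi_m d r s : R) : 0 < d -> 0 < r -> 0 <= Phi_m -> head <= Phi_m -> s <= r ->
  head + Phi_m * (/ d ^ 2 + 1) * s <= (2 + r / d ^ 2) * Rmax 1 r * Phi_m.
Proof.
  intros Hd Hr HPh Hhead Hs.
  assert (Hq : 0 < / d ^ 2) by (apply Rinv_0_lt_compat, pow_lt, Hd).
  assert (H1 := Rmax_l 1 r). assert (Hr' := Rmax_r 1 r).
  set (M := Rmax 1 r) in *. unfold Rdiv.
  assert (Phi_m * (/ d ^ 2 + 1) * s <= Phi_m * (/ d ^ 2 + 1) * r)
    by (apply Rmult_le_compat_l; [apply Rmult_le_pos|]; lra).
  assert (0 <= Phi_m * (M - 1) * (1 + r * / d ^ 2) + Phi_m * (M - r))
    by (apply Rplus_le_le_0_compat; repeat apply Rmult_le_pos; nra).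
  nra.
Qed.

Lemma antitone_le (a : nat -> R) : (forall j, (1 <= j)%nat -> a (S j) <= a j) ->
  forall i j, (1 <= i <= j)%nat -> a j <= a i.
Proof.
  intros Ha i j Hij. induction j as [|j IH]; [lia|].
  destruct (Nat.eq_dec i (S j)) as [-> | Hne]; [lra|].
  eapply Rle_trans; [apply Ha; lia | apply IH; lia].
Qed.

Lemma bound_pos (lam : nat -> R) :
  (exists B, forall j, (1 <= j)%nat -> Rabs (lam j) <= B) ->
  exists B, 0 < B /\ forall j, (1 <= j)%nat -> Rabs (lam j) <= B.
Proof.
  intros [B HB]. exists (Rmax B 1). split; [generalize (Rmax_r B 1); lra|].
  intros j Hj. eapply Rle_trans; [apply HB, Hj | apply Rmax_l].
Qed.

Theorem mainTheorem9 :
  forall (lam a : nat -> R),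
    (exists B, forall j, (1 <= j)%nat -> Rabs (lam j) <= B) ->
    (forall j, (1 <= j)%nat -> lam j <> 0) ->
    (forall j, (1 <= j)%nat -> 0 < a j) ->
    (forall j, (1 <= j)%nat -> a (S j) <= a j) ->
    a 1%nat = 1 ->
    Un_cv a 0 ->
  exists eps_o, 0 < eps_o < 1 /\
  forall (d r : R) (eta : nat -> R) (tau : R -> nat -> R),
    (forall eps j, 0 < eps < 1 -> (1 <= j)%nat -> 0 < tau eps j) ->
    AssumptionA lam tau d ->
    0 < r ->
  forall eps, 0 < eps < eps_o ->
  forall mstar, IsMstar a lam eps mstar ->
  forall theta0, InEllipsoid a eta r theta0 ->
  exists v, RiskIs mstar lam eta tau eps theta0 v /\
    v <= (2 + r / d ^ 2) * Rmax 1 r * Phi a lam eps mstar.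
Proof.
  intros lam a Hbound0 Hlam Ha Hanti Ha1 Ha0.
  destruct (bound_pos lam Hbound0) as [B [HB Hbound]].
  assert (Hc : 0 < Rmin (Lambda lam 1) (/ B ^ 2)).
  { apply Rmin_glb_lt; apply Rinv_0_lt_compat; [apply pow2_gt_0, Hlam; lia | apply pow_lt, HB]. }
  destruct (Phi_le_eventually a lam _ Hc Ha0) as [eps_o [K [Heps_o [HK HPhiK]]]].
  exists eps_o. split; [exact Heps_o|].
  intros d r eta tau Htau [Hd HA] Hr eps Heps m [Hm [Hmin _]] theta0 [s [Hs Hsr]].
  assert (Heps1 : 0 < eps < 1) by lra.
  destruct (IsG_exists lam eps Heps1) as [G HG].
  assert (HmG : (m <= G)%nat).
  { apply (le_IsG a lam eps B G m); auto; [lra|].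
    eapply Rle_trans; [apply Hmin, HK | apply HPhiK, Heps]. }
  destruct (RiskIs_le lam a eta theta0 tau eps d (Phi a lam eps m) s m ltac:(lra) Hd
              (fun j Hj => Htau eps j Heps1 Hj) Hlam) as [v [Hv Hvle]].
  - intros j Hj. split; [apply Ha, Hj | rewrite <- Ha1; apply antitone_le; auto].
  - intros j Hj. assert (HAj := HA eps Heps1 G HG j ltac:(lia)).
    eapply Rle_trans; [| apply Rge_le, HAj]. apply Rmult_le_compat_l; [lra | apply Rmax_l].
  - apply eps_sumLam_le_Phi, Hm.
  - intros j Hj. apply Rle_trans with (a m); [apply (antitone_le a Hanti); lia | apply Rmax_l].
  - exact Hs.
  - exists v. split; [exact Hv|].
    eapply Rle_trans; [exact Hvle|]. apply risk_budget; auto using eps_sumLam_le_Phi.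
    eapply Rle_trans; [apply Rlt_le, Ha, Hm | apply Rmax_l].
Qed.
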